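(* Let $n\ge 4$. For every cycle $C$ of length 8 in $Q_n$ there is an automorphism of $Q_n$ mapping $C$ onto exactly one of the following seven cycles, which are pairwise non-isomorphic (no automorphism of $Q_n$ maps one onto another): $C_8^1=(0,1,3,2,6,7,5,4)$, $C_8^2=(0,1,3,2,6,14,12,8)$, $C_8^3=(0,1,3,2,6,14,12,4)$, $C_8^4=(0,1,3,2,6,4,12,8)$, $C_8^5=(0,1,3,7,15,14,12,8)$, $C_8^6=(0,1,3,7,15,14,12,4)$, $C_8^7=(0,1,3,7,6,14,10,8)$. Moreover, the number of edges of $Q_n$ joining the parity-0 vertices of the cycle to vertices outside the cycle is $4n-12$ for $C_8^1$, $4n-9$ for $C_8^2$, $4n-10$ for $C_8^3$ and for $C_8^4$, and $4n-8$ for each of $C_8^5$, $C_8^6$, $C_8^7$.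
   Context: $Q_n$ is the $n$-dimensional hypercube whose vertices are the binary strings of length $n$, identified with the integers $0,\dots,2^n-1$ via binary expansion; two vertices are adjacent iff their labels differ in exactly one bit. The parity of a vertex is the number of ones in its label modulo 2. Cycles are written as sequences of vertices. The automorphisms of $Q_n$ are the maps $x\mapsto g_\pi(x\oplus v)$, where $\oplus$ is bitwise XOR with a fixed vertex $v$ and $g_\pi$ permutes the coordinate positions by a permutation $\pi$ of $\{0,\dots,n-1\}$. *)

From mathcomp Require Import all_boot all_fingroup.
Set Implicit Arguments. Unset Strict Implicit. Unset Printing Implicit Defensive.

Definition vtx (n : nat) := {ffun 'I_n -> bool}.

(* The vertex with integer label k (bit i of k is coordinate i). *)
Definition label (n k : nat) : vtx n := [ffun i : 'I_n => odd (k %/ 2 ^ i)].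

Definition adj (n : nat) (x y : vtx n) : bool := #|[set i | x i != y i]| == 1.

Definition parity (n : nat) (x : vtx n) : bool := odd #|[set i | x i]|.

(* automorphism x |-> g_pi (x xor v), where (g_pi y)_(pi i) = y_i *)
Definition qaut (n : nat) (p : 'S_n) (v : vtx n) (x : vtx n) : vtx n :=
  [ffun j : 'I_n => x (p^-1 j) (+) v (p^-1 j)]%g.

Definition is_qcycle (n : nat) (c : seq (vtx n)) : bool :=
  [&& 3 <= size c, uniq c & path.cycle (@adj n) c].

Definition same_cycle (n : nat) (c d : seq (vtx n)) : Prop :=
  exists k, c = rot k d \/ c = rot k (rev d).

Definition aut_maps_onto (n : nat) (c d : seq (vtx n)) : Prop :=
  exists (p : 'S_n) (v : vtx n), same_cycle (map (qaut p v) c) d.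

(* the seven cycles C_8^1 .. C_8^7 (indexed 0..6) *)
Definition C8_labels : seq (seq nat) :=
  [:: [:: 0; 1; 3; 2; 6; 7; 5; 4];
      [:: 0; 1; 3; 2; 6; 14; 12; 8];
      [:: 0; 1; 3; 2; 6; 14; 12; 4];
      [:: 0; 1; 3; 2; 6; 4; 12; 8];
      [:: 0; 1; 3; 7; 15; 14; 12; 8];
      [:: 0; 1; 3; 7; 15; 14; 12; 4];
      [:: 0; 1; 3; 7; 6; 14; 10; 8]].

Definition C8 (n : nat) (i : 'I_7) : seq (vtx n) := map (label n) (nth [::] C8_labels i).

Definition even_out_edges (n : nat) (c : seq (vtx n)) : nat :=
  #|[set xy : vtx n * vtx n | [&& xy.1 \in c, ~~ parity xy.1, xy.2 \notin c & adj xy.1 xy.2]]|.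

Definition C8_count (n : nat) (i : 'I_7) : nat :=
  nth 0 [:: 4 * n - 12; 4 * n - 9; 4 * n - 10; 4 * n - 10; 4 * n - 8; 4 * n - 8; 4 * n - 8] i.

From mathcomp Require Import all_boot all_fingroup zify.
Set Implicit Arguments. Unset Strict Implicit. Unset Printing Implicit Defensive.

(* An 8-cycle of Q_n is the walk from one of its vertices x along a word w of eight
   coordinate directions; w is closed (every coordinate occurs an even number of times)
   and simple (no proper factor of w is closed).  An automorphism translates x and
   renames the letters of w, so the orbit of the cycle only depends on the equality
   pattern of w, i.e. on which letters of w coincide.  Enumerating all closed simple
   patterns of length 8 shows that each is the pattern of a rotation or reflection of
   one of the seven cycles C_8^i, and these seven are told apart by an automorphism
   invariant: the number of pairs of their vertices at each Hamming distance.  The edge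
   count follows because an even vertex x of a cycle c has n - |N(x) /\ c| neighbours
   outside c. *)

(** * Words *)

Lemma last_scanl (T1 T2 : Type) (f : T1 -> T2 -> T1) x s :
  last x (scanl f x s) = foldl f x s.
Proof. by elim: s x => //= y s IH x; exact: IH. Qed.

Fixpoint bounded_seqs (bs : seq nat) : seq (seq nat) :=
  if bs is b :: bs' then [seq x :: s | x <- iota 0 b.+1, s <- bounded_seqs bs']
  else [:: [::]].

Lemma mem_bounded_seqs bs s : size s = size bs ->
  (forall k, k < size s -> nth 0 s k <= nth 0 bs k) -> s \in bounded_seqs bs.
Proof.
elim: bs s => [|b bs IH] [|x s] // [size_s] le_s.
apply/allpairsP; exists (x, s); split => //; first by rewrite mem_iota ltnS (le_s 0).
by apply: IH => // k lt_k; exact: (le_s k.+1).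
Qed.

Lemma sumn_map_subnK (T : Type) (f : T -> nat) m s : all (fun x => f x <= m) s ->
  sumn [seq m - f x | x <- s] + sumn (map f s) = size s * m.
Proof. by elim: s => //= x s IH /andP [le_fx /IH]; lia. Qed.

Definition closed_word (T : eqType) (s : seq T) :=
  all (fun l => ~~ odd (count_mem l s)) s.

Definition simple_word (T : eqType) (w : seq T) :=
  all (fun b => all (fun a => ~~ closed_word (drop a (take b w))) (iota 0 b)) (iota 0 (size w)).

Definition eq_matrix (T : eqType) (s : seq T) := [seq [seq x == y | y <- s] | x <- s].

Section WordMaps.
Variables (T U : eqType) (f : T -> U).

Lemma closed_word_map s : {in s &, injective f} ->
  closed_word (map f s) = closed_word s.
Proof.
move=> f_inj; rewrite /closed_word all_map; apply: eq_in_all => l l_s /=.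
by rewrite count_map; congr (~~ odd _); apply: eq_in_count => y y_s /=; rewrite (inj_in_eq f_inj).
Qed.

Lemma simple_word_map w : {in w &, injective f} ->
  simple_word (map f w) = simple_word w.
Proof.
move=> f_inj; rewrite /simple_word size_map; apply: eq_all => b; apply: eq_all => a.
rewrite -map_take -map_drop closed_word_map //.
by apply: sub_in2 f_inj => y /mem_drop /mem_take.
Qed.

Lemma eq_matrix_map s : {in s &, injective f} ->
  eq_matrix (map f s) = eq_matrix s.
Proof.
move=> f_inj; rewrite /eq_matrix -map_comp; apply/eq_in_map => x x_s /=.
by rewrite -map_comp; apply/eq_in_map => y y_s /=; rewrite (inj_in_eq f_inj).
Qed.

End WordMaps.

Lemma eq_matrix_perm (T : finType) (s t : seq T) :
  eq_matrix s = eq_matrix t -> exists p : {perm T}, map p s = t.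
Proof.
elim: s t => [|x s IH] [|y t] //=; first by exists 1%g.
case=> _ row_xy /(congr1 (map behead)); rewrite -!map_comp => /IH [q q_st].
have size_st : size s = size t by rewrite -q_st size_map.
have row_at i : i < size s -> (x == nth x s i) = (y == nth y t i).
  move=> lt_i; have := congr1 (nth false ^~ i) row_xy.
  by rewrite (nth_map x) // (nth_map y) // -size_st.
case: (boolP (x \in s)) => [x_s | x_notin_s].
  exists q; rewrite q_st; congr cons; have lt_x : index x s < size s by rewrite index_mem.
  have := row_at _ lt_x; rewrite nth_index // eqxx => /esym/eqP ->.
  by rewrite -q_st (nth_map x) // nth_index.
have y_notin_t : y \notin t.
  apply/negP => y_t; move/negP: x_notin_s; apply.
  have lt_y : index y t < size s by rewrite size_st index_mem.
  have := row_at _ lt_y; rewrite nth_index // eqxx => /eqP ->.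
  exact: mem_nth.
exists (q * tperm (q x) y)%g; rewrite permM tpermL; congr cons.
rewrite -q_st; apply/eq_in_map => z z_s; rewrite permM tpermD //.
  by rewrite (inj_eq perm_inj); apply: contraNneq x_notin_s => ->.
by apply: contraNneq y_notin_t => ->; rewrite -q_st map_f.
Qed.

(** * Walks in the hypercube *)

Section Hypercube.
Variable n : nat.
Implicit Types (x y : vtx n) (c : seq (vtx n)) (w : seq 'I_n).

Definition flip x j : vtx n := [ffun i => x i (+) (i == j)].

Definition walk x w := belast x (scanl flip x w).

Definition hdist x y := #|[set i | x i != y i]|.

Lemma adjP x y : reflect (exists j, y = flip x j) (adj x y).
Proof.
apply: (iffP cards1P) => [[j /setP xy_j]|[j ->]].
  exists j; apply/ffunP => i; have := xy_j i; rewrite !inE ffunE => <-.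
  by case: (x i); case: (y i).
by exists j; apply/setP => i; rewrite !inE ffunE; case: (x i); case: (i == j).
Qed.

Lemma foldl_flipE x w : foldl flip x w = [ffun j => x j (+) odd (count_mem j w)].
Proof.
elim: w x => [|j w IH] x /=; first by apply/ffunP => i; rewrite ffunE addbF.
by rewrite IH; apply/ffunP => i; rewrite !ffunE oddD oddb addbA eq_sym.
Qed.

Lemma foldl_flip_closed x w : (foldl flip x w == x) = closed_word w.
Proof.
rewrite foldl_flipE; apply/eqP/allP => [/ffunP x_w j _ | w_even].
  by have := x_w j; rewrite ffunE; case: (x j); case: odd.
apply/ffunP => j; rewrite ffunE; case: (boolP (j \in w)) => [/w_even/negbTE -> | ].
  exact: addbF.
by move/count_memPn ->; exact: addbF.
Qed.

Lemma path_adjP x p : reflect (exists w, p = scanl flip x w) (path (@adj n) x p).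
Proof.
elim: p x => [|y p IH] x /=.
  by apply: (iffP idP) => // _; exists [::].
apply: (iffP andP) => [[xy /IH [w p_w]] | [[|i w] //= [y_x p_w]]].
  by have /adjP [i y_x] := xy; exists (i :: w); rewrite p_w y_x.
by split; [apply/adjP; exists i | apply/IH; exists w; rewrite y_x].
Qed.

Lemma nth_walk x w k : k < size w -> nth x (walk x w) k = foldl flip x (take k w).
Proof.
move=> lt_k; rewrite -(nth_cons_scanl x flip (ltnW lt_k)) /walk lastI.
by rewrite nth_rcons size_belast size_scanl lt_k.
Qed.

Lemma uniq_walk_simple x w : uniq (walk x w) -> simple_word w.
Proof.
move=> walk_uniq; apply/allP => b; rewrite mem_iota add0n => /andP [_ lt_b].
apply/allP => a; rewrite mem_iota add0n => /andP [_ lt_ab].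
have lt_a := ltn_trans lt_ab lt_b.
have : nth x (walk x w) b != nth x (walk x w) a.
  by rewrite nth_uniq ?size_belast ?size_scanl // gtn_eqF.
rewrite !nth_walk // -{1}[take b w](cat_take_drop a) take_takel ?(ltnW lt_ab) //.
by rewrite foldl_cat foldl_flip_closed.
Qed.

Lemma qcycle_walk c : is_qcycle c ->
  exists x w, [/\ c = walk x w, closed_word w & simple_word w].
Proof.
case: c => [|x c] /and3P [// _ c_uniq c_cycle].
have /path_adjP [w walk_c] := c_cycle.
have c_walk : x :: c = walk x w by rewrite /walk -walk_c belast_rcons.
exists x, w; split => //; last by rewrite c_walk in c_uniq; exact: uniq_walk_simple c_uniq.
have := congr1 (last x) walk_c; rewrite last_rcons last_scanl => closed_w.
by rewrite -(foldl_flip_closed x) -closed_w.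
Qed.

Lemma qaut_flip (p : 'S_n) v x j : qaut p v (flip x j) = flip (qaut p v x) (p j).
Proof.
apply/ffunP => i; rewrite !ffunE -(inj_eq (@perm_inj _ p)) permKV.
by rewrite addbAC.
Qed.

Lemma map_qaut_walk (p : 'S_n) v x w :
  map (qaut p v) (walk x w) = walk (qaut p v x) (map p w).
Proof.
by rewrite /walk -belast_map; congr belast; elim: w x => //= j w IH x; rewrite IH qaut_flip.
Qed.

Lemma hdist_qaut (p : 'S_n) v x y : hdist (qaut p v x) (qaut p v y) = hdist x y.
Proof.
rewrite /hdist -[RHS](card_preimset _ (@perm_inj _ p^-1)%g).
by apply: eq_card => j; rewrite !inE !ffunE; case: (x _); case: (y _); case: (v _).
Qed.

Definition dist_count c d := sumn [seq count (fun y => hdist x y == d) c | x <- c].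

Lemma dist_count_perm c c' d : perm_eq c c' -> dist_count c d = dist_count c' d.
Proof.
move=> cc'; rewrite /dist_count (perm_sumn (perm_map _ cc')).
by congr sumn; apply/eq_map => x; apply/seq.permP.
Qed.

Lemma dist_count_qaut (p : 'S_n) v c d : dist_count (map (qaut p v) c) d = dist_count c d.
Proof.
rewrite /dist_count -map_comp; congr sumn; apply/eq_map => x /=.
by rewrite count_map; apply: eq_count => y /=; rewrite hdist_qaut.
Qed.

Lemma dist_count_aut c c' d : aut_maps_onto c c' -> dist_count c d = dist_count c' d.
Proof.
case=> p [v [k E]]; rewrite -(dist_count_qaut p v); apply: dist_count_perm.
by case: E => ->; rewrite perm_rot ?perm_rev.
Qed.

Lemma card_adj x : #|[set y | adj x y]| = n.
Proof.
have -> : [set y | adj x y] = [set flip x j | j : 'I_n].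
  by apply/setP => y; rewrite inE; apply/adjP/imsetP => [[j ->]|[j _ ->]]; exists j.
rewrite card_imset ?card_ord // => j k /ffunP /(_ j); rewrite !ffunE eqxx.
by case: (x j); case: eqP.
Qed.

Lemma card_adj_out x c : uniq c ->
  #|[set y | (y \notin c) && adj x y]| + count (adj x) c = n.
Proof.
move=> c_uniq; rewrite -[RHS](card_adj x) -(cardsID [set y | y \in c] [set y | adj x y]) addnC.
congr (_ + _); last by apply: eq_card => y; rewrite !inE.
rewrite -size_filter -(card_uniqP (filter_uniq _ c_uniq)).
by apply: eq_card => y; rewrite !inE mem_filter andbC.
Qed.

Lemma even_out_edges_sum c : uniq c ->
  even_out_edges c = sumn [seq n - count (adj x) c | x <- c & ~~ parity x].
Proof.
move=> c_uniq; rewrite /even_out_edges -sum1_card.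
pose P x := (x \in c) && ~~ parity x; pose Q x y := (y \notin c) && adj x y.
rewrite (eq_bigl (fun xy => P xy.1 && Q xy.1 xy.2)); last first.
  by move=> [x y]; rewrite inE /= !andbA.
rewrite -(pair_big_dep P Q (fun _ _ => 1)) /=.
rewrite sumnE big_map big_filter [RHS]big_mkcond (big_uniq _ c_uniq) -big_mkcondr /=.
apply: eq_bigr => x _; rewrite sum1dep_card.
by rewrite -[X in _ = X - _](card_adj_out x c_uniq) addnK.
Qed.

Lemma even_out_edgesE c : uniq c ->
  even_out_edges c =
  count (predC (@parity n)) c * n - sumn [seq count (adj x) c | x <- c & ~~ parity x].
Proof.
move=> c_uniq; rewrite even_out_edges_sum // -size_filter.
rewrite -(sumn_map_subnK (f := fun x => count (adj x) c) (m := n)) ?addnK //.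
by apply/allP => x _; rewrite -[X in _ <= X](card_adj_out x c_uniq) leq_addl.
Qed.

End Hypercube.

Arguments flip {n}.
Arguments walk {n}.

(** * Vertices with labels below 16 *)

Definition bit (a j : nat) := odd (a %/ 2 ^ j).

Lemma bit_half a j : bit a./2 j = bit a j.+1.
Proof. by rewrite /bit -divn2 -divnMA -expnS. Qed.

Lemma bit_small a j : a < 2 ^ 4 -> 4 <= j -> bit a j = false.
Proof. by move=> lt_a le_j; rewrite /bit divn_small // (leq_trans lt_a) // leq_pexp2l. Qed.

Lemma bits_inj k a b : a < 2 ^ k -> b < 2 ^ k ->
  (forall j, j < k -> bit a j = bit b j) -> a = b.
Proof.
elim: k a b => [|k IH] a b; first by rewrite !ltnS !leqn0 => /eqP -> /eqP ->.
rewrite expnS => lt_a lt_b ab_bits.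
rewrite -[a]odd_double_half -[b]odd_double_half.
have -> : odd a = odd b by have := ab_bits 0 isT; rewrite /bit !divn1.
congr (_ + _.*2); apply: IH; rewrite ?ltn_half_double -?muln2 1?mulnC //.
by move=> j lt_j; rewrite !bit_half ab_bits.
Qed.

Definition hdist4 a b := count (fun j => bit a j != bit b j) (iota 0 4).
Definition adj4 a b := hdist4 a b == 1.
Definition parity4 a := odd (count (bit a) (iota 0 4)).

(* Directions are computed as nats: [inord] matches on the opaque [idP], which would
   block vm_compute on the certificates below. *)
Definition flip_dir a b := find (fun j => bit a j != bit b j) (iota 0 4).

Definition cycle_dirs (M : seq nat) :=
  if M is a :: M' then pairmap flip_dir a (rcons M' a) else [::].

Lemma flip_dir_lt a b : adj4 a b -> flip_dir a b < 4.
Proof.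
move=> /eqP ab_dist; have : has (fun j => bit a j != bit b j) (iota 0 4).
  by rewrite has_count -/(hdist4 a b) ab_dist.
by rewrite has_find size_iota.
Qed.

Lemma cycle_dirs_lt M : path.cycle adj4 M -> all (gtn 4) (cycle_dirs M).
Proof.
case: M => //= a M; move: (rcons M a) => s.
by elim: s a => //= b s IH a /andP [ab bs]; rewrite flip_dir_lt // IH.
Qed.

Lemma card_low_bits n (P : pred nat) : 4 <= n -> (forall j, 4 <= j -> P j = false) ->
  #|[set i : 'I_n | P i]| = count P (iota 0 4).
Proof.
move=> n_ge4 P_low.
have -> : #|[set i : 'I_n | P i]| = count P (iota 0 n).
  rewrite cardsE cardE /enum_mem size_filter -enumT -val_enum_ord count_map.
  exact: eq_count.
rewrite -(subnKC n_ge4) iotaD count_cat [X in _ + X](@eq_in_count _ _ pred0).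
  by rewrite count_pred0 addn0.
by move=> j; rewrite mem_iota => /andP [le_j _]; exact: P_low.
Qed.

Section Labels.
Variable n : nat.
Hypothesis n_ge4 : 4 <= n.
Notation small := (gtn (2 ^ 4)).
Let dir_of (j : nat) : 'I_n := widen_ord n_ge4 (inord j).

Lemma hdist_label a b : small a -> small b -> hdist (label n a) (label n b) = hdist4 a b.
Proof.
move=> sa sb; rewrite /hdist /hdist4 -(@card_low_bits n (fun j => bit a j != bit b j) n_ge4).
  by apply: eq_card => i; rewrite !inE !ffunE.
by move=> j le_j; rewrite !bit_small.
Qed.

Lemma adj_label a b : small a -> small b -> adj (label n a) (label n b) = adj4 a b.
Proof. by move=> sa sb; rewrite /adj -/(hdist _ _) hdist_label. Qed.

Lemma parity_label a : small a -> parity (label n a) = parity4 a.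
Proof.
move=> sa; rewrite /parity /parity4 -(@card_low_bits n (bit a) n_ge4) => [|j le_j].
  by congr odd; apply: eq_card => i; rewrite !inE ffunE.
exact: bit_small.
Qed.

Lemma label_inj : {in small &, injective (label n)}.
Proof.
move=> a b sa sb /ffunP ab; apply: (bits_inj sa sb) => j lt_j.
by have := ab (Ordinal (leq_trans lt_j n_ge4)); rewrite !ffunE.
Qed.

Lemma label_flip_dir a b : small a -> small b -> adj4 a b ->
  label n b = flip (label n a) (dir_of (flip_dir a b)).
Proof.
move=> sa sb; rewrite -adj_label // => /adjP [j Ej]; rewrite Ej; congr flip.
have bit_b i : i < n -> bit b i = bit a i (+) (i == j).
  by move=> lt_i; have /ffunP/(_ (Ordinal lt_i)) := Ej; rewrite !ffunE.
have lt_j : j < 4.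
  rewrite ltnNge; apply/negP => le_j; have := bit_b j (ltn_ord j).
  by rewrite !bit_small // eqxx.
apply: val_inj; rewrite /= /flip_dir (@eq_in_find _ _ (pred1 (val j))) => [|i].
  rewrite -[find _ _]/(index _ _) -[X in index X _]add0n -(nth_iota 0 0 lt_j).
  by rewrite index_uniq ?iota_uniq ?size_iota ?inordK.
rewrite mem_iota => /andP [_ lt_i]; rewrite bit_b ?(leq_trans lt_i) //=.
by case: (bit a i); case: (i == j).
Qed.

Lemma map_label_path a M : all small (a :: M) -> path adj4 a M ->
  map (label n) M = scanl flip (label n a) (map dir_of (pairmap flip_dir a M)).
Proof.
elim: M a => //= b M IH a /and3P [sa sb sM] /andP [ab bM].
by rewrite -label_flip_dir // (IH b) //= sb.
Qed.

Lemma map_label_cycle M : all small M -> path.cycle adj4 M ->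
  map (label n) M = walk (label n (head 0 M)) (map dir_of (cycle_dirs M)).
Proof.
case: M => //= a M sM aM; rewrite /walk -(map_label_path (a := a)) //.
  by rewrite map_rcons belast_rcons.
by case/andP: sM => sa sM; rewrite /= all_rcons sM !andbT; apply/andP.
Qed.

Lemma walk_onto_label_cycle (x : vtx n) (w : seq 'I_n) M :
  all small M -> path.cycle adj4 M -> eq_matrix w = eq_matrix (cycle_dirs M) ->
  exists (p : 'S_n) v, map (qaut p v) (walk x w) = map (label n) M.
Proof.
move=> sM cM wM.
have dir_inj : {in cycle_dirs M &, injective dir_of}.
  move=> i j /(allP (cycle_dirs_lt cM)) lt_i /(allP (cycle_dirs_lt cM)) lt_j /(congr1 val) /=.
  by rewrite !inordK.
have [p pw] : exists p : 'S_n, map p w = map dir_of (cycle_dirs M).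
  by apply: eq_matrix_perm; rewrite eq_matrix_map.
pose v : vtx n := [ffun i => x i (+) label n (head 0 M) (p i)].
have px : qaut p v x = label n (head 0 M).
  by apply/ffunP => j; rewrite !ffunE permKV addbA addbb.
by exists p, v; rewrite map_qaut_walk px pw map_label_cycle.
Qed.

End Labels.

(** * The seven cycles *)

Definition dihedral (T : Type) (L : seq T) :=
  [seq rot k L | k <- iota 0 (size L)] ++ [seq rot k (rev L) | k <- iota 0 (size L)].

Lemma same_cycle_dihedral n (L M : seq nat) :
  M \in dihedral L -> same_cycle (map (label n) M) (map (label n) L).
Proof.
by rewrite mem_cat => /orP [] /mapP [k _ ->]; exists k; [left | right]; rewrite map_rot ?map_rev.
Qed.

Lemma adj4C : symmetric adj4.
Proof.
move=> a b; rewrite /adj4 /hdist4 (eq_count (a2 := fun j => bit b j != bit a j)) //.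
by move=> j; rewrite eq_sym.
Qed.

Lemma dihedral_cycle (L M : seq nat) : all (gtn (2 ^ 4)) L -> path.cycle adj4 L ->
  M \in dihedral L -> all (gtn (2 ^ 4)) M && path.cycle adj4 M.
Proof.
move=> sL cL; rewrite mem_cat => /orP [] /mapP [k _ ->].
  by rewrite (eq_all_r (mem_rot k L)) rot_cycle sL.
rewrite (eq_all_r (mem_rot k _)) rot_cycle all_rev rev_cycle sL.
by rewrite (eq_cycle (e' := adj4)) // => a b; exact: adj4C.
Qed.

Lemma C8_labels_cycles :
  all (fun L => [&& size L == 8, uniq L, all (gtn (2 ^ 4)) L & path.cycle adj4 L]) C8_labels.
Proof. by vm_compute. Qed.

Definition C8_shapes := [seq [seq eq_matrix (cycle_dirs M) | M <- dihedral L] | L <- C8_labels].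

(* The equality pattern of a word w is represented by [seq index x w | x <- w], whose
   k-th entry is at most k.  Writing [if] rather than [==>] matters: vm_compute is
   call-by-value and would otherwise test every candidate against all shapes. *)
Lemma C8_shapes_cover :
  all (fun r => if simple_word r then has (fun S => eq_matrix r \in S) C8_shapes else true)
    [seq r <- bounded_seqs (iota 0 8) | closed_word r].
Proof. by vm_compute. Qed.

Lemma C8_classify n (n_ge4 : 4 <= n) (c : seq (vtx n)) :
  is_qcycle c -> size c = 8 -> exists i : 'I_7, aut_maps_onto c (C8 n i).
Proof.
move=> c_cyc c_size; have [x [w [c_walk w_closed w_simple]]] := qcycle_walk c_cyc.
have w_size : size w = 8 by rewrite -c_size c_walk size_belast size_scanl.
pose r := map (index^~ w) w.
have index_inj : {in w &, injective (index^~ w)}.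
  by move=> i j i_w j_w /(congr1 (nth i w)); rewrite !nth_index.
have r_cand : r \in [seq r <- bounded_seqs (iota 0 8) | closed_word r].
  rewrite mem_filter closed_word_map // w_closed; apply: mem_bounded_seqs.
    by rewrite size_map size_iota.
  move=> k; rewrite size_map w_size => lt_k.
  by rewrite nth_iota // (nth_map (widen_ord n_ge4 ord0)) ?index_nth ?w_size.
have /hasP [_ /mapP [L L_C8 ->] /mapP [M M_L rM]] : has (fun S => eq_matrix r \in S) C8_shapes.
  by have := allP C8_shapes_cover r r_cand; rewrite simple_word_map // w_simple.
have /and4P [_ _ sL cL] := allP C8_labels_cycles L L_C8.
have /andP [sM cM] := dihedral_cycle sL cL M_L.
have wM : eq_matrix w = eq_matrix (cycle_dirs M) by rewrite -rM eq_matrix_map.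
have [p [v pv]] := walk_onto_label_cycle n_ge4 x sM cM wM.
have lt_L : index L C8_labels < 7 by rewrite index_mem.
exists (Ordinal lt_L), p, v; rewrite c_walk pv /C8 /= nth_index //.
exact: same_cycle_dihedral.
Qed.

Definition dist_count4 (M : seq nat) d := sumn [seq count (fun b => hdist4 a b == d) M | a <- M].

Lemma C8_dist_profiles_uniq :
  uniq [seq [seq dist_count4 L d | d <- iota 0 5] | L <- C8_labels].
Proof. by vm_compute. Qed.

Definition even_inner_degrees4 (M : seq nat) := [seq count (adj4 a) M | a <- M & ~~ parity4 a].

Lemma C8_even_inner_degrees :
  map even_inner_degrees4 C8_labels =
  [:: [:: 3; 3; 3; 3]; [:: 3; 2; 2; 2]; [:: 3; 2; 3; 2]; [:: 4; 2; 2; 2];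
      [:: 2; 2; 2; 2]; [:: 2; 2; 2; 2]; [:: 2; 2; 2; 2]].
Proof. by vm_compute. Qed.

Section C8Facts.
Variable n : nat.
Hypothesis n_ge4 : 4 <= n.
Variable i : 'I_7.
Let L := nth [::] C8_labels i.

Lemma C8_label_facts : [&& size L == 8, uniq L, all (gtn (2 ^ 4)) L & path.cycle adj4 L].
Proof. by apply: (allP C8_labels_cycles); exact: mem_nth. Qed.

Lemma C8_qcycle : is_qcycle (C8 n i).
Proof.
have /and4P [/eqP L_size L_uniq sL cL] := C8_label_facts.
rewrite /is_qcycle /C8 -/L size_map L_size map_inj_in_uniq; last first.
  by apply: sub_in2 (label_inj n_ge4) => a /(allP sL).
rewrite L_uniq cycle_map (eq_in_cycle (e' := adj4) _ sL) // => a b sa sb /=.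
exact: adj_label.
Qed.

Lemma C8_countE :
  C8_count n i = size (even_inner_degrees4 L) * n - sumn (even_inner_degrees4 L).
Proof.
rewrite /L -(nth_map [::] [::] even_inner_degrees4) // C8_even_inner_degrees.
by case: i => [[|[|[|[|[|[|[|k]]]]]]] lt_i].
Qed.

Lemma C8_even_out_edges : even_out_edges (C8 n i) = C8_count n i.
Proof.
have /and4P [_ _ sL _] := C8_label_facts.
have /and3P [_ c_uniq _] := C8_qcycle.
have parityE : {in L, forall a, parity (label n a) = parity4 a}.
  by move=> a /(allP sL); exact: parity_label.
rewrite C8_countE even_out_edgesE // /C8 -/L count_map filter_map -map_comp.
rewrite /even_inner_degrees4 size_map size_filter.
rewrite (eq_in_count (a2 := predC parity4)); last by move=> a /parityE /= ->.
rewrite (eq_in_filter (a2 := fun a => ~~ parity4 a)); last by move=> a /parityE /= ->.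
congr (_ * n - sumn _); apply/eq_in_map => a; rewrite mem_filter => /andP [_ /(allP sL) sa] /=.
by rewrite count_map; apply/eq_in_count => b /(allP sL) sb /=; rewrite adj_label.
Qed.

Lemma C8_dist_count d : dist_count (C8 n i) d = dist_count4 L d.
Proof.
have /and4P [_ _ sL _] := C8_label_facts.
rewrite /dist_count /C8 -/L -map_comp; congr sumn; apply/eq_in_map => a /(allP sL) sa /=.
by rewrite count_map; apply/eq_in_count => b /(allP sL) sb /=; rewrite hdist_label.
Qed.

End C8Facts.

Lemma C8_dist_count_inj n (n_ge4 : 4 <= n) (i j : 'I_7) :
  (forall d, dist_count (C8 n i) d = dist_count (C8 n j) d) -> i = j.
Proof.
move=> ij; have size_C8 : size C8_labels = 7 by [].
apply: val_inj; apply/eqP.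
rewrite -(nth_uniq [::] _ _ C8_dist_profiles_uniq) ?size_map ?size_C8 ?ltn_ord //.
rewrite !(nth_map [::]) ?size_C8 ?ltn_ord //; apply/eqP/eq_in_map => d _.
by rewrite -!(C8_dist_count n_ge4) ij.
Qed.

Theorem mainTheorem9 (n : nat) (hn : 4 <= n) :
  (forall c : seq (vtx n), is_qcycle c -> size c = 8 ->
     exists! i : 'I_7, aut_maps_onto c (C8 n i)) /\
  (forall i j : 'I_7, i != j -> ~ aut_maps_onto (C8 n i) (C8 n j)) /\
  (forall i : 'I_7, is_qcycle (C8 n i) /\ even_out_edges (C8 n i) = C8_count n i).
Proof.
split; [|split].
- move=> c c_cyc c_size; have [i ci] := C8_classify hn c_cyc c_size.
  exists i; split => // j cj; apply: (C8_dist_count_inj hn) => d.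
  by rewrite -(dist_count_aut d ci) (dist_count_aut d cj).
- move=> i j /eqP ij ij_aut; apply: ij; apply: (C8_dist_count_inj hn) => d.
  exact: dist_count_aut.
- by move=> i; split; [exact: C8_qcycle | exact: C8_even_out_edges].
Qed.
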